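(* Let $p\ge 2$ be an integer. If there exist constants $\alpha,\beta$ such that $\mathrm{conv}^{\leq p}_{\mathcal F}(n)\le \alpha n+\beta$ for every nonnegative integer $n$, then $\mathrm{id}^{\leq p}_{\mathcal F}(n)\le \alpha n+2\beta$ for every nonnegative integer $n$.
   Context: All graphs are finite and simple. For an oriented graph $D$ and $X\subseteq V(D)$, the inversion of $X$ reverses every arc with both endvertices in $X$; a $(\leq p)$-inversion is the inversion of a set of at most $p$ vertices. $\mathrm{id}^{\leq p}(G)$ is the maximum, over all ordered pairs $(\vec G_1,\vec G_2)$ of orientations of $G$, of the minimum number of $(\leq p)$-inversions transforming $\vec G_1$ into $\vec G_2$. $\mathrm{conv}^{\leq p}(G)$ is the minimum number of $(\leq p)$-inversions transforming an orientation of $G$ into its converse (all arcs reversed); it does not depend on the orientation. $\mathrm{id}^{\leq p}_{\mathcal F}(n)$ (resp. $\mathrm{conv}^{\leq p}_{\mathcal F}(n)$) is the maximum of $\mathrm{id}^{\leq p}(F)$ (resp. $\mathrm{conv}^{\leq p}(F)$) over all forests $F$ of order $n$. *)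

From mathcomp Require Import all_boot all_order all_algebra.
From Stdlib Require Import ClassicalEpsilon.
Set Implicit Arguments. Unset Strict Implicit. Unset Printing Implicit Defensive.

(* For an (undirected) graph G, G (u,v) means uv is an edge;
   for an oriented graph D, D (u,v) means there is an arc u -> v. *)
Definition graph n := {ffun 'I_n * 'I_n -> bool}.

Definition grel n (G : graph n) : rel 'I_n := fun u v => G (u, v).

Definition simple_graph n (G : graph n) : bool :=
  [forall u, ~~ G (u, u)] && [forall u, forall v, G (u, v) == G (v, u)].

Definition is_forest n (G : graph n) : Prop :=
  simple_graph G /\
  forall s : seq 'I_n, uniq s -> 3 <= size s -> ~~ cycle (grel G) s.

Definition is_orientation n (G D : graph n) : bool :=
  [forall u, forall v,
     (D (u, v) ==> G (u, v)) && (G (u, v) ==> (D (u, v) != D (v, u)))].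

Definition invert n (X : {set 'I_n}) (D : graph n) : graph n :=
  [ffun uv => if (uv.1 \in X) && (uv.2 \in X) then D (uv.2, uv.1) else D uv].

Definition invert_seq n (s : seq {set 'I_n}) (D : graph n) : graph n :=
  foldl (fun D' X => invert X D') D s.

Definition reach n (p : nat) (D1 D2 : graph n) : pred nat := fun k =>
  [exists s : k.-tuple {set 'I_n},
     all (fun X : {set 'I_n} => #|X| <= p) s && (invert_seq s D1 == D2)].

(* minimum number of (<= p)-inversions transforming D1 into D2
   (0 by convention if impossible, which never happens for p >= 2 when
   D1, D2 are orientations of the same graph) *)
Definition inv_dist n (p : nat) (D1 D2 : graph n) : nat :=
  match excluded_middle_informative (exists k, reach p D1 D2 k) with
  | left H => ex_minn H
  | right _ => 0
  end.

Definition converse n (D : graph n) : graph n := [ffun uv => D (uv.2, uv.1)].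

Definition idp n (p : nat) (G : graph n) : nat :=
  \max_(D1 : graph n | is_orientation G D1)
    \max_(D2 : graph n | is_orientation G D2) inv_dist p D1 D2.

Definition std_orient n (G : graph n) : graph n :=
  [ffun uv => G uv && (uv.1 < uv.2)%N].

(* conv^{<= p}(G) (independent of the orientation chosen) *)
Definition convp n (p : nat) (G : graph n) : nat :=
  inv_dist p (std_orient G) (converse (std_orient G)).

Definition forestb n (G : graph n) : bool :=
  if excluded_middle_informative (is_forest G) then true else false.

Definition idF (p n : nat) : nat :=
  \max_(G : graph n | forestb G) idp p G.
Definition convF (p n : nat) : nat :=
  \max_(G : graph n | forestb G) convp p G.

From Pilot Require Import Defs.
From mathcomp Require Import all_boot all_order all_algebra.
From mathcomp Require Import zify lra.
From Stdlib Require Import ClassicalEpsilon.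
Set Implicit Arguments. Unset Strict Implicit. Unset Printing Implicit Defensive.

(* Given orientations D1, D2 of a forest F, colour the vertices so that an edge
   is monochromatic exactly when D1 and D2 disagree on it; this is possible
   because a forest has no cycle on which the parity constraints could clash.
   Reversing every arc inside each colour class then turns D1 into D2, and
   inside a colour class this is the conversion problem for an induced
   subforest.  Hence id(F) <= conv(F[V]) + conv(F[~V]) for some V, and the
   linear bound on conv_F(k) + conv_F(n - k) gives alpha n + 2 beta. *)

Definition cover_count n (s : seq {set 'I_n}) (u v : 'I_n) : nat :=
  count (fun X : {set 'I_n} => (u \in X) && (v \in X)) s.

Lemma cover_countC n (s : seq {set 'I_n}) u v : cover_count s u v = cover_count s v u.
Proof. by apply: eq_count => X; rewrite andbC. Qed.

Lemma cover_count_cat n (s1 s2 : seq {set 'I_n}) u v :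
  cover_count (s1 ++ s2) u v = cover_count s1 u v + cover_count s2 u v.
Proof. exact: count_cat. Qed.

Lemma invert_seqE n s (D : graph n) u v :
  invert_seq s D (u, v) = if odd (cover_count s u v) then D (v, u) else D (u, v).
Proof.
elim: s D => [|X s IHs] D //=.
rewrite /invert_seq /= -/(invert_seq s (invert X D)) IHs !ffunE /= oddD.
by case: (u \in X); case: (v \in X); case: (odd _).
Qed.

Lemma invert_seq_converse n (s : seq {set 'I_n}) (D : graph n) :
  (forall u v, D (u, v) != D (v, u) -> odd (cover_count s u v)) ->
  invert_seq s D = converse D.
Proof.
move=> odd_s; apply/ffunP => -[u v]; rewrite invert_seqE ffunE /=.
case odd_uv: (odd _) => //.
by case: (D (u, v) =P D (v, u)) => // /eqP /odd_s; rewrite odd_uv.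
Qed.

Lemma reach_seq n p (D1 D2 : graph n) (s : seq {set 'I_n}) :
  all (fun X : {set 'I_n} => #|X| <= p) s -> invert_seq s D1 = D2 ->
  reach p D1 D2 (size s).
Proof. by move=> small_s sD1; apply/existsP; exists (in_tuple s); rewrite small_s sD1 /=. Qed.

Lemma inv_dist_min n p (D1 D2 : graph n) k : reach p D1 D2 k -> inv_dist p D1 D2 <= k.
Proof.
move=> reach_k; rewrite /inv_dist; case: excluded_middle_informative => [ex_k|]; last first.
  by case; exists k.
by case: ex_minnP => m _; apply.
Qed.

Lemma inv_distP n p (D1 D2 : graph n) k :
  reach p D1 D2 k -> reach p D1 D2 (inv_dist p D1 D2).
Proof.
move=> reach_k; rewrite /inv_dist; case: excluded_middle_informative => [ex_k|]; last first.
  by case; exists k.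
by case: ex_minnP.
Qed.

Lemma simple_graph_irr n (G : graph n) u : simple_graph G -> ~~ G (u, u).
Proof. by case/andP => /forallP. Qed.

Lemma simple_graph_sym n (G : graph n) u v : simple_graph G -> G (u, v) = G (v, u).
Proof. by case/andP => _ /forallP /(_ u) /forallP /(_ v) /eqP. Qed.

Lemma simple_graphI n (G : graph n) :
  (forall u, ~~ G (u, u)) -> (forall u v, G (u, v) = G (v, u)) -> simple_graph G.
Proof.
move=> irrG symG; apply/andP; split; apply/forallP => // u.
by apply/forallP => v; rewrite symG.
Qed.

Lemma forest_inj m n (G : graph n) (H : graph m) (f : 'I_m -> 'I_n) :
  injective f -> simple_graph H -> (forall u v, H (u, v) -> G (f u, f v)) ->
  is_forest G -> is_forest H.
Proof.
move=> f_inj simpleH HG [_ acyclicG]; split=> // s s_uniq s_size.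
apply/negP => s_cycle.
have := acyclicG (map f s); rewrite map_inj_uniq // size_map.
move=> /(_ s_uniq s_size) /negP; apply.
by rewrite cycle_map; apply: sub_cycle s_cycle => u v; apply: HG.
Qed.

Lemma forestbP n (G : graph n) : reflect (is_forest G) (forestb G).
Proof. by rewrite /forestb; case: excluded_middle_informative; constructor. Qed.

Definition delete_edge n (G : graph n) (a b : 'I_n) : graph n :=
  [ffun uv => G uv && (uv != (a, b)) && (uv != (b, a))].

Lemma delete_edge_sub n (G : graph n) a b uv : delete_edge G a b uv -> G uv.
Proof. by rewrite ffunE => /andP [/andP []]. Qed.

Lemma forest_delete_edge n (G : graph n) a b :
  is_forest G -> is_forest (delete_edge G a b).
Proof.
move=> forestG; have simpleG := forestG.1.
apply: (@forest_inj _ _ G _ id) => // [|u v]; last exact: delete_edge_sub.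
apply: simple_graphI => [u|u v]; first by rewrite ffunE (negbTE (simple_graph_irr u simpleG)).
rewrite !ffunE !xpair_eqE (simple_graph_sym u v simpleG).
by case: (u == a); case: (v == b); case: (u == b); case: (v == a); rewrite ?andbF ?andbT.
Qed.

Lemma card_delete_edge n (G : graph n) a b : G (a, b) ->
  #|[set uv | delete_edge G a b uv]| < #|[set uv | G uv]|.
Proof.
move=> Gab; apply: proper_card; apply/properP; split.
  by apply/subsetP => uv; rewrite !inE; apply: delete_edge_sub.
by exists (a, b); rewrite !inE ?ffunE ?eqxx ?andbF.
Qed.

(* A path from a to b avoiding the edge ab, shortened to a simple path, closes
   up with ab into a cycle of length at least 3. *)
Lemma forest_delete_edge_disconnected n (G : graph n) a b :
  is_forest G -> G (a, b) -> ~~ connect (Defs.grel (delete_edge G a b)) a b.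
Proof.
move=> [simpleG acyclicG] Gab; apply/negP => /connectP [q path_q last_q].
move: last_q; case/shortenP: path_q => q' path_q' uniq_q' _ last_q'.
have cycle_q' : cycle (Defs.grel G) (a :: q').
  rewrite /= rcons_path (sub_path _ path_q') -?last_q'.
    by rewrite /Defs.grel simple_graph_sym.
  by move=> u v; apply: delete_edge_sub.
have size_q' : 3 <= size (a :: q').
  case: q' path_q' uniq_q' last_q' {cycle_q'} => [|x [|y q'']] //=.
    by move=> _ _ ab; move: (simple_graph_irr a simpleG); rewrite -{2}ab Gab.
  by rewrite andbT => ax _ xb; move: ax; rewrite /Defs.grel ffunE -xb eqxx andbF.
by move/negP: (acyclicG _ uniq_q' size_q').
Qed.

Lemma connect_edge_sym n (G : graph n) a u v : simple_graph G -> G (u, v) ->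
  connect (Defs.grel G) a u = connect (Defs.grel G) a v.
Proof.
move=> simpleG Guv; apply/idP/idP => conn; apply: connect_trans conn (connect1 _) => //.
by rewrite /Defs.grel simple_graph_sym.
Qed.

Section ForestParityColouring.

Variables (n : nat) (w : 'I_n -> 'I_n -> bool).

Definition parity_colouring (G : graph n) (c : 'I_n -> bool) : Prop :=
  forall u v, G (u, v) -> c u (+) c v = w u v.

(* Colour the forest without the edge ab; as a and b lie in different
   components, recolouring the component of a fixes the constraint on ab. *)
Lemma parity_colouring_add_edge (G : graph n) a b c :
  is_forest G -> G (a, b) -> w b a = w a b ->
  parity_colouring (delete_edge G a b) c -> exists c', parity_colouring G c'.
Proof.
move=> forestG Gab wC colour_c; set G' := delete_edge G a b.
have simpleG' : simple_graph G' := (forest_delete_edge a b forestG).1.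
have not_ab : connect (Defs.grel G') a b = false.
  exact/negbTE/forest_delete_edge_disconnected.
pose flip := (c a (+) c b) != w a b.
exists (fun x => c x (+) (connect (Defs.grel G') a x && flip)) => u v Guv.
case G'uv: (G' (u, v)).
  rewrite -(connect_edge_sym a simpleG' G'uv) -colour_c //.
  by case: (c u); case: (c v); case: (_ && _).
move: G'uv; rewrite ffunE Guv /= => /negbT; rewrite negb_and !negbK.
by case/orP => /eqP [-> ->]; rewrite ?wC connect0 not_ab /flip;
   case: (c a); case: (c b); case: (w a b).
Qed.

Lemma forest_parity_colouring (G : graph n) :
  is_forest G -> (forall u v, G (u, v) -> w u v = w v u) ->
  exists c, parity_colouring G c.
Proof.
move: {2}#|[set uv | G uv]| (leqnn #|[set uv | G uv]|) => m.
elim: m G => [|m IHm] G sizeG forestG wC.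
  exists (fun _ => false) => u v Guv; suff: (u, v) \in set0 by rewrite inE.
  by move: sizeG; rewrite leqn0 cards_eq0 => /eqP <-; rewrite inE.
case: (pickP (fun uv => G uv)) => [[a b] Gab | noedge]; last first.
  by exists (fun _ => false) => u v Guv; move: (noedge (u, v)); rewrite Guv.
have [|||c colour_c] := IHm (delete_edge G a b).
- by rewrite -ltnS (leq_trans (card_delete_edge Gab)).
- exact: forest_delete_edge.
- by move=> u v /delete_edge_sub; apply: wC.
- apply: (parity_colouring_add_edge forestG Gab _ colour_c); apply: wC.
  by rewrite simple_graph_sym //; exact: forestG.1.
Qed.

End ForestParityColouring.

Definition induced n (F : graph n) (V : {set 'I_n}) : graph #|V| :=
  [ffun uv => F (enum_val uv.1, enum_val uv.2)].

Lemma forest_induced n (F : graph n) V : is_forest F -> is_forest (induced F V).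
Proof.
move=> forestF; have simpleF := forestF.1.
apply: (forest_inj (@enum_val_inj _ _)) forestF => [|u v]; last by rewrite ffunE.
apply: simple_graphI => [u|u v]; rewrite !ffunE ?simple_graph_irr //=.
by rewrite simple_graph_sym.
Qed.

(* Inverting the pair {u, v} once for every edge uv reverses every arc. *)
Lemma reach_converse_std_orient m p (G : graph m) : simple_graph G -> 2 <= p ->
  exists k, reach p (std_orient G) (converse (std_orient G)) k.
Proof.
move=> simpleG p_ge2.
pose E := [pred ij : 'I_m * 'I_m | G ij && (ij.1 < ij.2)].
pose s := [seq [set ij.1; ij.2] | ij <- enum E].
exists (size s); apply: reach_seq.
  apply/allP => X /mapP [ij _ ->]; rewrite cards2.
  by apply: leq_trans p_ge2; case: (_ != _).
have odd_edge (u v : 'I_m) : u < v -> G (u, v) -> odd (cover_count s u v).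
  move=> ltuv Guv; rewrite /cover_count count_map.
  rewrite (@eq_in_count _ _ (pred1 (u, v))); last first.
    move=> [i j]; rewrite mem_enum inE /= => /andP [_ ltij].
    rewrite !in_set2 xpair_eqE -!val_eqE /=.
    by do ! (case: eqP => ? /=); lia.
  by rewrite count_uniq_mem ?enum_uniq // mem_enum inE /= Guv ltuv.
apply: invert_seq_converse => u v; rewrite !ffunE /=.
case: (ltngtP u v) => [ltuv|ltvu|/val_inj ->]; rewrite ?andbT ?andbF ?eqxx //.
- by case Guv: (G (u, v)) => // _; apply: odd_edge.
- by case Gvu: (G (v, u)) => // _; rewrite cover_countC; apply: odd_edge.
Qed.

Lemma convp_cover m p (G : graph m) : simple_graph G -> 2 <= p ->
  exists s : seq {set 'I_m}, [/\ size s = convp p G,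
    all (fun X : {set 'I_m} => #|X| <= p) s &
    forall u v, G (u, v) -> odd (cover_count s u v)].
Proof.
move=> simpleG p_ge2; have [k reach_k] := reach_converse_std_orient simpleG p_ge2.
have /existsP [t /andP [small_t /eqP conv_t]] := inv_distP reach_k.
exists t; split; rewrite ?size_tuple // => u v Guv.
have Guv' : G (v, u) by rewrite -simple_graph_sym.
move: (congr1 (fun D : graph m => D (u, v)) conv_t).
move: (congr1 (fun D : graph m => D (v, u)) conv_t).
rewrite /= !invert_seqE !ffunE /= Guv Guv' /= (cover_countC _ v u).
case: (ltngtP u v) => [|| /val_inj eq_uv] //=; try by case: (odd _).
by move: (simple_graph_irr u simpleG); rewrite {2}eq_uv Guv.
Qed.

Lemma convp_induced_le_convF n p (F : graph n) V : is_forest F ->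
  convp p (induced F V) <= convF p #|V|.
Proof.
by move=> forestF; apply/leq_bigmax_cond/forestbP/forest_induced.
Qed.

Definition lift_set n (V : {set 'I_n}) (X : {set 'I_#|V|}) : {set 'I_n} :=
  [set enum_val x | x in X].
Arguments lift_set {n} V X.

Lemma cover_count_lift n (V : {set 'I_n}) s i j :
  cover_count (map (lift_set V) s) (enum_val i) (enum_val j) = cover_count s i j.
Proof.
rewrite /cover_count count_map; apply: eq_count => X /=.
by rewrite /lift_set !mem_imset //; apply: enum_val_inj.
Qed.

Lemma cover_count_lift_out n (V : {set 'I_n}) s u v : u \notin V ->
  cover_count (map (lift_set V) s) u v = 0.
Proof.
move=> uNV; apply/eqP; rewrite -leqn0 leqNgt -has_count.
apply/hasP => -[_ /mapP [X _ ->] /andP [/imsetP [x _ ux] _]].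
by move: uNV; rewrite ux enum_valP.
Qed.

Lemma odd_cover_count_lift n (F : graph n) (V : {set 'I_n}) s u v :
  (forall i j, induced F V (i, j) -> odd (cover_count s i j)) ->
  u \in V -> v \in V -> F (u, v) -> odd (cover_count (map (lift_set V) s) u v).
Proof.
move=> odd_s uV vV Fuv.
rewrite -(enum_rankK_in uV uV) -(enum_rankK_in uV vV) cover_count_lift odd_s //.
by rewrite ffunE /= !(enum_rankK_in uV).
Qed.

Lemma all_small_lift n p (V : {set 'I_n}) s :
  all (fun X : {set 'I_#|V|} => #|X| <= p) s ->
  all (fun X : {set 'I_n} => #|X| <= p) (map (lift_set V) s).
Proof.
move=> /allP small_s; rewrite all_map; apply/allP => X sX /=.
exact: leq_trans (leq_imset_card _ _) (small_s X sX).
Qed.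

Lemma cover_count_lift_out_r n (V : {set 'I_n}) s u v : v \notin V ->
  cover_count (map (lift_set V) s) u v = 0.
Proof. by rewrite cover_countC; apply: cover_count_lift_out. Qed.

Lemma orientation_sub n (G D : graph n) u v :
  is_orientation G D -> D (u, v) -> G (u, v).
Proof. by move/forallP/(_ u)/forallP/(_ v)/andP => [/implyP]. Qed.

Lemma orientation_rev n (G D : graph n) u v :
  is_orientation G D -> G (u, v) -> D (v, u) = ~~ D (u, v).
Proof.
move/forallP/(_ u)/forallP/(_ v)/andP => [_ /implyP orientGD] /orientGD.
by case: (D (u, v)); case: (D (v, u)).
Qed.

Lemma inv_dist_le_convp_split n p (F : graph n) D1 D2 : 2 <= p -> is_forest F ->
  is_orientation F D1 -> is_orientation F D2 ->
  exists V : {set 'I_n},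
    inv_dist p D1 D2 <= convp p (induced F V) + convp p (induced F (~: V)).
Proof.
move=> p_ge2 forestF D1F D2F; have simpleF := forestF.1.
have [|c colour_c] := @forest_parity_colouring _ (fun u v => D1 (u, v) == D2 (u, v)) F forestF.
  by move=> u v Fuv /=; rewrite (orientation_rev D1F Fuv) (orientation_rev D2F Fuv);
     case: (D1 (u, v)); case: (D2 (u, v)).
pose V := [set u | c u]; exists V.
have [s1 [size_s1 small_s1 odd_s1]] := convp_cover (forest_induced V forestF).1 p_ge2.
have [s2 [size_s2 small_s2 odd_s2]] :=
  convp_cover (forest_induced (~: V) forestF).1 p_ge2.
pose t := map (lift_set V) s1 ++ map (lift_set (~: V)) s2.
have odd_t u v : F (u, v) -> odd (cover_count t u v) = (c u == c v).
  move=> Fuv; rewrite cover_count_cat.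
  case cu: (c u); case cv: (c v) => /=.
  - rewrite [X in _ + X]cover_count_lift_out ?inE ?cu // addn0.
    by rewrite (odd_cover_count_lift odd_s1) ?inE.
  - by rewrite cover_count_lift_out_r ?inE ?cv // cover_count_lift_out ?inE ?cu.
  - by rewrite cover_count_lift_out ?inE ?cu // cover_count_lift_out_r ?inE ?cv.
  - rewrite cover_count_lift_out ?inE ?cu // add0n.
    by rewrite (odd_cover_count_lift odd_s2) ?inE ?cu ?cv.
have t_D1 : invert_seq t D1 = D2.
  apply/ffunP => -[u v]; rewrite invert_seqE.
  have [Fuv|nFuv] := boolP (F (u, v)).
    rewrite odd_t // (orientation_rev D1F Fuv); move: (colour_c u v Fuv) => /=.
    by case: (c u); case: (c v); case: (D1 (u, v)); case: (D2 (u, v)).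
  have nD u' v' D : is_orientation F D -> ~~ F (u', v') -> D (u', v') = false.
    by move=> DF; apply: contraNF; apply: orientation_sub.
  have nFvu : ~~ F (v, u) by rewrite -simple_graph_sym.
  by rewrite (nD u v D1) // (nD u v D2) // (nD v u D1) //; case: (odd _).
rewrite -size_s1 -size_s2 -(size_map (lift_set V)) -(size_map (lift_set (~: V)) s2).
rewrite -size_cat; apply/inv_dist_min/reach_seq/t_D1.
by rewrite all_cat !all_small_lift.
Qed.

Lemma idF_le_max_split p n : 2 <= p ->
  idF p n <= \max_(k < n.+1) (convF p k + convF p (n - k)).
Proof.
move=> p_ge2; apply/bigmax_leqP => F /forestbP forestF.
apply/bigmax_leqP => D1 D1F; apply/bigmax_leqP => D2 D2F.
have [V le_split] := inv_dist_le_convp_split p_ge2 forestF D1F D2F.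
have cardVC : #|~: V| = n - #|V| by rewrite cardsCs setCK card_ord.
apply: leq_trans le_split _; apply: leq_trans (leq_bigmax (inord #|V| : 'I_n.+1)).
rewrite inordK; last by rewrite ltnS (leq_trans (max_card _)) ?card_ord.
by rewrite -cardVC leq_add ?convp_induced_le_convF.
Qed.

Unset Implicit Arguments.
Import Order.TTheory GRing.Theory Num.Theory.
Local Open Scope ring_scope.

Theorem mainTheorem15 (R : realFieldType) (p : nat) (alpha beta : R) :
  (2 <= p)%N ->
  (forall n : nat, (convF p n)%:R <= alpha * n%:R + beta) ->
  forall n : nat, (idF p n)%:R <= alpha * n%:R + 2 * beta.
Proof.
move=> p_ge2 convF_le n.
have [k max_k] := bigop.eq_bigmax (fun k : 'I_n.+1 => (convF p k + convF p (n - k))%N)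
  ltac:(by rewrite card_ord).
apply: le_trans (_ : (convF p k + convF p (n - k))%:R <= _).
  by rewrite ler_nat -max_k idF_le_max_split.
have n_split : n%:R = k%:R + (n - k)%:R :> R by rewrite -natrD subnKC // -ltnS.
by rewrite natrD n_split; have := convF_le k; have := convF_le (n - k)%N; lra.
Qed.
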